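(* Let $T=(V_T,E_T)$ be a finite tree, $r\in V_T$, and $Q\subseteq V_T$ non-empty. Root $T$ at $r$, let $V_Q$ be the set of nodes $u$ whose subtree (w.r.t. root $r$) contains a node of $Q$, let $T_Q$ be the subtree of $T$ induced by $V_Q$, let $A_Q=\{u\in V_Q:\deg_{T_Q}(u)\ge 3\}$, and let $Q'=Q\cup A_Q$. Then $T$ has one or two $Q'$-centroids.
   Context: For a tree $T$ and a set $Q\subseteq V_T$, a node $u\in Q$ is a $Q$-centroid if every connected component of $T-u$ contains at most $|Q|/2$ nodes of $Q$. *)

From mathcomp Require Import all_boot.
From mathcomp Require Import boolp.
Set Implicit Arguments. Unset Strict Implicit. Unset Printing Implicit Defensive.

Section Tree.
Variables (T : finType) (e : rel T).

Definition simple_path (x y : T) (p : seq T) : bool :=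
  [&& path e x p, last x p == y & uniq (x :: p)].

Definition is_tree : Prop :=
  symmetric e /\ irreflexive e /\
  forall x y : T, exists! p : seq T, simple_path x y p.

Definition del_rel (u : T) : rel T := [rel x y | [&& e x y, x != u & y != u]].

(* u is a Q-centroid: u \in Q and every component of T - u (the component
   of each v != u) contains at most |Q|/2 nodes of Q *)
Definition is_centroid (Q : {set T}) (u : T) : bool :=
  (u \in Q) &&
  [forall v, (v != u) ==>
     (#|[set w in Q | connect (del_rel u) v w]|.*2 <= #|Q|)].

Definition centroids (Q : {set T}) : {set T} := [set u | is_centroid Q u].

(* w lies in the subtree of u for the root r: u lies on the (unique)
   r-w path *)
Definition in_subtree (r u w : T) : Prop :=
  exists p, simple_path r w p /\ u \in r :: p.

Definition VQ (r : T) (Q : {set T}) : {set T} :=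
  [set u | `[< exists2 q, q \in Q & in_subtree r u q >]].

Definition degTQ (r : T) (Q : {set T}) (u : T) : nat :=
  #|[set v in VQ r Q | e u v]|.

Definition AQ (r : T) (Q : {set T}) : {set T} :=
  [set u in VQ r Q | 3 <= degTQ r Q u].

Definition Qprime (r : T) (Q : {set T}) : {set T} := Q :|: AQ r Q.

End Tree.

(* Every S has a balanced vertex c: each component of T - c carries at most half
   of S (walk from any vertex towards a heavy component).  Call S branch-closed if
   every vertex separating three elements of S lies in S.  If c is not in S, branch
   closure forces S into exactly two components of T - c, each holding half of S,
   and the element x of S closest to c is an S-centroid: a vertex where some other
   element of S branches off the c-x path would be an element of S closer to c, or
   would separate three elements of S.  Q' = Q ∪ A_Q is branch-closed, since a vertex
   separating three elements of Q' has three neighbours in T_Q.  Finally, two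
   S-centroids u, v cover S by the side of v in T - u and the side of u in T - v,
   which must then be disjoint halves of S; this rules out a third centroid. *)

From mathcomp Require Import all_boot.
From mathcomp Require Import boolp.
From mathcomp Require Import zify.
Set Implicit Arguments. Unset Strict Implicit. Unset Printing Implicit Defensive.

Section TreeSeparation.
Variables (T : finType) (e : rel T).
Hypothesis tree : is_tree e.

Local Notation conn y := (connect (del_rel e y)).

Lemma tree_sym : symmetric e. Proof. by case: tree. Qed.

Lemma tree_irr : irreflexive e. Proof. by case: tree => _ []. Qed.

Lemma simple_path_exists x y : exists p, simple_path e x y p.
Proof. by case: tree => _ [_ /(_ x y) [p []]]; exists p. Qed.

Lemma simple_path_unique x y p q :
  simple_path e x y p -> simple_path e x y q -> p = q.
Proof.
by case: tree => _ [_ /(_ x y) [p0 [_ uniq_p0]]] /uniq_p0 <- /uniq_p0 <-.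
Qed.

Lemma del_rel_sym y : symmetric (del_rel e y).
Proof. by move=> a b; rewrite /del_rel /= tree_sym [(a != y) && _]andbC. Qed.

Lemma conn_sym y a b : conn y a b = conn y b a.
Proof. exact: (sym_connect_sym (@del_rel_sym y)). Qed.

Lemma path_del_rel y x p :
  path e x p -> y \notin x :: p -> path (del_rel e y) x p.
Proof.
elim: p x => [//|z p IHp] x /= /andP[exz zp].
rewrite inE negb_or eq_sym => /andP[xy yNzp].
have zy : z != y by move: yNzp; rewrite inE negb_or eq_sym => /andP[].
by rewrite {1}/del_rel /= exz xy zy IHp.
Qed.

Lemma del_rel_path y x p : path (del_rel e y) x p -> x != y ->
  path e x p /\ y \notin x :: p.
Proof.
elim: p x => [|z p IHp] x /=; first by rewrite inE eq_sym => _ ->.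
case/andP=> /and3P[exz _ zy] zp xy; have [ezp yNzp] := IHp _ zp zy.
by rewrite exz ezp inE negb_or eq_sym xy.
Qed.

Lemma conn_path y x p : path e x p -> y \notin x :: p -> conn y x (last x p).
Proof. by move=> xp yNp; apply/connectP; exists p => //; apply: path_del_rel. Qed.

Lemma conn_removed y x : conn y x y -> x = y.
Proof.
case/connectP=> p; elim/last_ind: p => [//|p z _].
rewrite rcons_path last_rcons => /andP[_ /and3P[_ _ zy]] yz.
by rewrite -yz eqxx in zy.
Qed.

Lemma conn_simple_path y u v : conn y u v -> u != y ->
  exists2 p, simple_path e u v p & y \notin u :: p.
Proof.
case/connectP=> p up -> uy; case: (shortenP up) => q uq uniq_q _.
have [eq yNq] := del_rel_path uq uy.
by exists q; rewrite // /simple_path eq eqxx uniq_q.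
Qed.

Lemma conn_simple_pathE y u v p : simple_path e u v p -> u != y ->
  conn y u v = (y \notin u :: p).
Proof.
move=> sp uy; apply/idP/idP => [/conn_simple_path /(_ uy) [q sq yNq]|yNp].
  by rewrite (simple_path_unique sp sq).
by case/and3P: sp => up /eqP <- _; apply: conn_path.
Qed.

Lemma simple_path_prefix z u p s :
  simple_path e u z p -> s \in u :: p -> s != z -> conn z u s.
Proof.
case/and3P=> + /eqP + + s_in; case/splitPl: s_in => p1 p2 <-.
rewrite cat_path last_cat -cat_cons cat_uniq => /andP[up1 _] lz.
case/and3P=> _ /hasPn zNp1 _ sz; apply: conn_path up1 _.
case: p2 => [|a p2] in lz zNp1 *; first by rewrite /= in lz; rewrite lz eqxx in sz.
by apply: zNp1; rewrite -lz /= mem_last.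
Qed.

Lemma neighbor_toward c v : v != c -> exists2 a, e c a & conn c a v.
Proof.
move=> vc; have [[|a p] /and3P[cp /eqP lv uniq_p]] := simple_path_exists c v.
  by rewrite -lv eqxx in vc.
case/andP: cp => eca ap; case/andP: uniq_p => cNp _.
by exists a; rewrite // -lv conn_path.
Qed.

Lemma edge_sides_disjoint c a t : e c a -> conn a c t -> conn c a t -> False.
Proof.
move=> eca act cat; have ca : c != a by apply: contraTneq eca => ->; rewrite tree_irr.
have ta : t != a.
  by apply: contraTneq act => ->; apply/negP => /conn_removed ca'; rewrite ca' eqxx in ca.
have tc : t != c.
  by apply: contraTneq cat => ->; apply/negP => /conn_removed ac; rewrite ac eqxx in ca.
rewrite conn_sym in act.
have [q /and3P[tq /eqP lc uniq_q] aNq] := conn_simple_path act ta.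
have sp : simple_path e t a (rcons q a).
  rewrite /simple_path rcons_path tq lc eca last_rcons eqxx.
  by rewrite -rcons_cons rcons_uniq aNq.
move: cat; rewrite conn_sym (conn_simple_pathE sp tc) -rcons_cons mem_rcons.
by rewrite inE negb_or -lc mem_last andbF.
Qed.

Lemma conn_sides a b t : a != b -> conn b a t || conn a b t.
Proof.
move=> ab; have [p sp] := simple_path_exists t a.
have [bp|bNp] := boolP (b \in t :: p).
  by rewrite [conn a _ _]conn_sym (simple_path_prefix sp bp) ?orbT // eq_sym.
by case/and3P: sp => tp /eqP lp _; rewrite [conn b _ _]conn_sym -lp conn_path.
Qed.

Lemma conn_sidesN a b t : a != b -> ~~ conn b a t -> conn a b t.
Proof. by move=> ab; case/orP: (conn_sides t ab) => [->|]. Qed.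

Lemma conn_separator x y c w : conn x c w -> ~~ conn y c w -> conn x c y.
Proof.
move=> xcw yNcw; have xy : x != y by apply: contraNneq yNcw => <-.
case/orP: (conn_sides c xy) => [yxc|]; last by rewrite conn_sym.
have yNxw : ~~ conn y x w.
  by apply: contra yNcw; apply: connect_trans; rewrite conn_sym.
have := conn_sides w xy; rewrite (negbTE yNxw) /= => xyw.
by apply: connect_trans xcw _; rewrite conn_sym.
Qed.

Lemma conn_side_sub a b v t : a != b -> ~~ conn a v b -> conn a v t -> conn b a t.
Proof.
move=> ab aNvb avt; case/orP: (conn_sides t ab) => // abt.
by case/negP: aNvb; apply: connect_trans avt _; rewrite conn_sym.
Qed.

Lemma conn_step y y' c t : e y y' -> ~~ conn y c t -> conn y y' t -> ~~ conn y' c t.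
Proof.
move=> eyy' yNct yy't; apply/negP => y'ct.
have y'yc : conn y' y c by rewrite conn_sym (conn_separator y'ct yNct).
exact: edge_sides_disjoint eyy' (connect_trans y'yc y'ct) yy't.
Qed.

Lemma conn_comp_proper c y z : y != c -> conn z c y -> ~~ conn y c z ->
  [set t | conn y c t] \proper [set t | conn z c t].
Proof.
move=> yc zcy yNcz; apply/properP; split.
  apply/subsetP => t; rewrite !inE => yct.
  by apply: contraR yNcz => zNct; apply: conn_separator yct zNct.
by exists y; rewrite !inE //; apply/negP => /conn_removed cy; rewrite cy eqxx in yc.
Qed.

Lemma branch_point c x w : x != c -> conn c x w -> conn x c w ->
  exists y, [/\ y != c, ~~ conn y c x, ~~ conn y c w & ~~ conn y x w].
Proof.
move=> xc cxw xcw; pose Y y := [&& y != c, ~~ conn y c x & ~~ conn y c w].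
have [a eca cax] := neighbor_toward xc.
have Ya : Y a.
  apply/and3P; split; first by apply: contraTneq eca => ->; rewrite tree_irr.
    by apply/negP => acx; apply: edge_sides_disjoint eca acx cax.
  by apply/negP => acw; apply: edge_sides_disjoint eca acw (connect_trans cax cxw).
have [y /and3P[yc yNcx yNcw] ymax] :=
  @arg_maxnP _ a Y (fun y => #|[set t | conn y c t]|) Ya.
exists y; split => //; apply/negP => yxw.
have yx : x != y by apply: contraNneq yNcw => <-.
have [y' eyy' yy'x] := neighbor_toward yx.
have yy'w : conn y y' w := connect_trans yy'x yxw.
have yNcy' : ~~ conn y c y'.
  by apply: contra yNcx => ycy'; apply: connect_trans ycy' yy'x.
have y'cy : conn y' c y.
  have yy' : y != y' by apply: contraTneq eyy' => ->; rewrite tree_irr.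
  case/orP: (conn_sides c yy') => [|yy'c]; first by rewrite conn_sym.
  by rewrite conn_sym yy'c in yNcy'.
have Yy' : Y y'.
  rewrite /Y (conn_step eyy' yNcx yy'x) (conn_step eyy' yNcw yy'w) !andbT.
  by apply: contraNneq yNcy' => ->; apply: connect0.
have := ymax _ Yy'; rewrite /= leqNgt => /negP; apply.
exact: proper_card (conn_comp_proper yc y'cy yNcy').
Qed.

Definition weight (S : {set T}) y v := #|[set w in S | conn y v w]|.

Definition balanced (S : {set T}) c :=
  forall v, v != c -> (weight S c v).*2 <= #|S|.

Lemma is_centroidP (S : {set T}) u :
  reflect (u \in S /\ balanced S u) (is_centroid e S u).
Proof.
apply: (iffP andP) => [[uS /forallP bal]|[uS bal]]; split=> //.
  by move=> v; apply/implyP.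
by apply/forallP => v; apply/implyP/bal.
Qed.

Lemma exists_balanced (S : {set T}) (c0 : T) : exists c, balanced S c.
Proof.
pose heavy (p : T * T) := (p.2 != p.1) && (#|S| < (weight S p.1 p.2).*2).
have [c /forallP bal|unbal] :=
  pickP (fun c => [forall v, (v != c) ==> ((weight S c v).*2 <= #|S|)]).
  by exists c => v; apply/implyP.
exfalso.
have heavy_at c : exists v, heavy (c, v).
  have /negbT/forallPn[v] := unbal c.
  by rewrite negb_imply -ltnNge => /andP[vc hv]; exists v; rewrite /heavy /= vc.
have [v0 /(arg_minnP (fun p => #|[set t | conn p.1 p.2 t]|))] := heavy_at c0.
case=> -[c v] /andP[/= vc cv_heavy] cv_min.
(* The neighbour a of c towards v has a heavy side; it is either disjoint from the
   side of v in T - c or strictly contained in it. *)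
have [a eca cav] := neighbor_toward vc.
have [w /andP[/= wa aw_heavy]] := heavy_at a.
have [awc|aNwc] := boolP (conn a w c).
  have disj : [set t in S | conn a w t] :&: [set t in S | conn c v t] = set0.
    apply/setP => t; rewrite !inE; apply/negP => /andP[/andP[_ awt] /andP[_ cvt]].
    apply: (edge_sides_disjoint eca (connect_trans _ awt) (connect_trans cav cvt)).
    by rewrite conn_sym.
  have := cardsUI [set t in S | conn a w t] [set t in S | conn c v t].
  have : #|[set t in S | conn a w t] :|: [set t in S | conn c v t]| <= #|S|.
    by apply/subset_leq_card/subsetP => t; rewrite !inE => /orP[] /andP[].
  by rewrite disj cards0 /weight /= in aw_heavy cv_heavy *; lia.
have ac : a != c by apply: contraTneq eca => ->; rewrite tree_irr.
have shrink : [set t | conn a w t] \proper [set t | conn c v t].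
  apply/properP; split.
    apply/subsetP => t; rewrite !inE => awt.
    by apply: connect_trans (conn_side_sub ac aNwc awt); rewrite conn_sym.
  exists a; rewrite !inE; first by rewrite conn_sym.
  by apply/negP => /conn_removed wa'; rewrite wa' eqxx in wa.
have := cv_min (a, w); rewrite /heavy /= wa aw_heavy => /(_ isT).
by rewrite leqNgt => /negP[]; apply: proper_card shrink.
Qed.

Lemma centroid_sides_disjoint (S : {set T}) u v w :
  is_centroid e S u -> is_centroid e S v -> u != v -> w \in S ->
  conn u v w -> conn v u w -> False.
Proof.
case/is_centroidP=> uS balu /is_centroidP[vS balv] uv wS uvw vuw.
have cover : S \subset [set t in S | conn u v t] :|: [set t in S | conn v u t].
  by apply/subsetP => t tS; rewrite !inE tS; apply: conn_sides; rewrite eq_sym.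
have := cardsUI [set t in S | conn u v t] [set t in S | conn v u t].
have := subset_leq_card cover.
have : 0 < #|[set t in S | conn u v t] :&: [set t in S | conn v u t]|.
  by apply/card_gt0P; exists w; rewrite !inE wS uvw vuw.
have := balu v; have := balv u uv; rewrite eq_sym uv /weight; lia.
Qed.

Lemma no_three_centroids (S : {set T}) u v z :
  is_centroid e S u -> is_centroid e S v -> is_centroid e S z ->
  u != v -> v != z -> z != u -> conn u v z -> False.
Proof.
move=> cu cv cz uv vz zu uvz.
have vNuz : ~~ conn v u z.
  by apply/negP; apply: centroid_sides_disjoint cu cv uv _ uvz; case/andP: cz.
have zuv : conn z u v.
  have zv : z != v by rewrite eq_sym.
  by case/orP: (conn_sides u zv); rewrite conn_sym // (negbTE vNuz).
apply: centroid_sides_disjoint cu cz _ _ _ zuv; rewrite 1?eq_sym //.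
  by case/andP: cv.
by rewrite conn_sym.
Qed.

Lemma card_centroids_le2 (S : {set T}) : #|centroids e S| <= 2.
Proof.
rewrite leqNgt; apply/card_gt2P => -[x [y [z [[]]]]].
rewrite !inE => cx cy cz [xy yz zx].
case/orP: (conn_sides z xy) => [yxz|xyz].
  by apply: no_three_centroids cy cx cz _ _ _ yxz; rewrite eq_sym.
exact: no_three_centroids cx cy cz xy yz zx xyz.
Qed.

Definition branch_closed (S : {set T}) :=
  forall y s1 s2 s3, s1 \in S -> s2 \in S -> s3 \in S ->
  ~~ conn y s1 s2 -> ~~ conn y s1 s3 -> ~~ conn y s2 s3 -> y \in S.

Section OutsideBalancedPoint.
Variables (S : {set T}) (c : T).
Hypotheses (S_closed : branch_closed S) (c_bal : balanced S c) (cNS : c \notin S).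

Lemma balanced_other_side x : x \in S -> exists2 b, b \in S & ~~ conn c x b.
Proof.
move=> xS; have xc : x != c by apply: contraNneq cNS => <-.
have [b /andP[bS cNxb]|same_side] := pickP [pred b in S | ~~ conn c x b].
  by exists b.
have : [set w in S | conn c x w] = S.
  apply/setP => t; rewrite inE; case tS: (t \in S) => //=.
  by move: (same_side t); rewrite /= tS => /negbFE.
have := c_bal xc; rewrite /weight => /[swap] ->.
have : 0 < #|S| by apply/card_gt0P; exists x.
lia.
Qed.

Lemma weight_other_sides_half x b : x \in S -> b \in S -> ~~ conn c x b ->
  (#|S| - weight S c x).*2 <= #|S|.
Proof.
move=> xS bS cNxb; have bc : b != c by apply: contraNneq cNS => <-.
have cover : S \subset [set w in S | conn c x w] :|: [set w in S | conn c b w].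
  apply/subsetP => s sS; rewrite !inE sS /=; apply/negPn/negP.
  rewrite negb_or => /andP[cNxs cNbs].
  by move: cNS; rewrite (S_closed xS bS sS cNxb cNxs cNbs).
have := subset_leq_card cover.
have := cardsUI [set w in S | conn c x w] [set w in S | conn c b w].
have := c_bal bc; rewrite /weight; lia.
Qed.

Lemma closest_separates_side x b w : x \in S -> b \in S -> ~~ conn c x b ->
  (forall y, y \in S -> #|[set t | conn x c t]| <= #|[set t | conn y c t]|) ->
  w \in S -> conn c x w -> ~~ conn x c w.
Proof.
move=> xS bS cNxb xmin wS cxw; apply/negP => xcw.
have xc : x != c by apply: contraNneq cNS => <-.
(* [xmin] says that x is an element of S closest to c; y is the branch point of
   c, x and w. *)
have [y [yc yNcx yNcw yNxw]] := branch_point xc cxw xcw.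
have [yS|yNS] := boolP (y \in S).
  have := xmin y yS; rewrite leqNgt => /negP[].
  exact: proper_card (conn_comp_proper yc (conn_separator xcw yNcw) yNcx).
have ycb : conn y c b.
  apply: contraR cNxb => yNcb; have cy : c != y by rewrite eq_sym.
  apply: connect_trans (conn_sidesN cy yNcb).
  by rewrite conn_sym (conn_sidesN cy yNcx).
case/negP: yNS; apply: (S_closed bS xS wS) => //.
  by apply: contra yNcx; apply: connect_trans ycb.
by apply: contra yNcw; apply: connect_trans ycb.
Qed.

Lemma exists_centroid_near_balanced x0 : x0 \in S -> exists u, is_centroid e S u.
Proof.
move=> x0S; have [x xS xmin] :=
  @arg_minnP _ x0 (mem S) (fun x => #|[set t | conn x c t]|) x0S.
have xc : x != c by apply: contraNneq cNS => <-.
have [b bS cNxb] := balanced_other_side xS.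
have half := weight_other_sides_half xS bS cNxb.
exists x; apply/is_centroidP; split=> // v vx.
have [xvc|xNvc] := boolP (conn x v c).
  have : [set w in S | conn x v w] \subset S :\: [set w in S | conn c x w].
    apply/subsetP => w; rewrite !inE => /andP[wS xvw]; rewrite wS andbT.
    apply/negP => cxw; case/negP: (closest_separates_side xS bS cNxb xmin wS cxw).
    by apply: connect_trans xvw; rewrite conn_sym.
  have sideS : [set w in S | conn c x w] \subset S.
    by apply/subsetP => t; rewrite inE => /andP[].
  by move/subset_leq_card; rewrite cardsDS // /weight in half *; lia.
have : [set w in S | conn x v w] \subset [set w in S | conn c x w].
  apply/subsetP => w; rewrite !inE => /andP[-> xvw].
  exact: conn_side_sub xc xNvc xvw.
by move/subset_leq_card; have := c_bal xc; rewrite /weight; lia.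
Qed.
End OutsideBalancedPoint.

Lemma exists_centroid (S : {set T}) :
  S != set0 -> branch_closed S -> exists u, is_centroid e S u.
Proof.
case/set0Pn=> x0 x0S S_closed; have [c c_bal] := exists_balanced S x0.
have [cS|cNS] := boolP (c \in S); first by exists c; apply/is_centroidP.
exact: (exists_centroid_near_balanced S_closed c_bal cNS x0S).
Qed.

Section RootedSubtrees.
Variables (r : T) (Q : {set T}).

Local Notation below u q := ((u == r) || ~~ conn u r q).

Lemma in_subtreeE u q : in_subtree e r u q <-> below u q.
Proof.
have [p sp] := simple_path_exists r q.
case: (eqVneq u r) => [->|ur] /=; first by split=> // _; exists p; rewrite mem_head.
rewrite (conn_simple_pathE sp) 1?eq_sym // negbK.
by split=> [[p' [/(simple_path_unique sp) <-]]|up]; last by exists p.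
Qed.

Lemma VQP u : reflect (exists2 q, q \in Q & below u q) (u \in VQ e r Q).
Proof.
rewrite inE; apply: (iffP (asboolP _)) => -[q qQ /in_subtreeE uq]; by exists q.
Qed.

Lemma below_trans y s q : below y s -> below s q -> below y q.
Proof.
case: (eqVneq y r) => [//|yr] /= yNrs; case: (eqVneq s r) => [sr|sr] /=.
  by rewrite sr connect0 in yNrs.
by move=> sNrq; apply: contra yNrs => yrq; apply: conn_separator yrq sNrq.
Qed.

Lemma Qprime_sub_VQ : Qprime e r Q \subset VQ e r Q.
Proof.
apply/subsetP => u; rewrite inE => /orP[uQ|]; last by rewrite inE => /andP[].
apply/VQP; exists u => //; case: (eqVneq u r) => //= ur.
by apply/negP => /conn_removed ru; rewrite ru eqxx in ur.
Qed.

Lemma neighbor_in_VQ y a s : y \in VQ e r Q -> s \in VQ e r Q ->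
  e y a -> conn y a s -> a \in VQ e r Q.
Proof.
move=> /VQP[q qQ yq] /VQP[q' q'Q sq'] eya yas.
have ay : a != y by apply: contraTneq eya => ->; rewrite tree_irr.
apply/VQP; have [yar|yNar] := boolP (conn y a r).
  exists q => //; have yr : y != r.
    apply: contraTneq yar => yr; rewrite {1}yr; apply/negP => /conn_removed ar.
    by rewrite ar yr eqxx in ay.
  move: yq; rewrite (negbTE yr) /= => yNrq; case: (eqVneq a r) => //= ar.
  apply/negP => arq; apply: (edge_sides_disjoint eya _ yar).
  have yNaq : ~~ conn y a q.
    by apply: contra yNrq; apply: connect_trans; rewrite conn_sym.
  by apply: connect_trans (conn_sidesN ay yNaq) _; rewrite conn_sym.
exists q' => //; apply: (@below_trans _ s) => //.
have ar : a != r by apply: contraNneq yNar => <-; apply: connect0.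
rewrite (negbTE ar) /=; apply/negP => ars.
have yNrs : ~~ conn y r s.
  by apply: contra yNar => yrs; apply: connect_trans yas _; rewrite conn_sym.
apply: (edge_sides_disjoint eya _ yas).
have ary := conn_separator ars yNrs; rewrite conn_sym in ary.
exact: connect_trans ary ars.
Qed.

Lemma Qprime_branch_closed : branch_closed (Qprime e r Q).
Proof.
move=> y s1 s2 s3 s1Q s2Q s3Q yN12 yN13 yN23.
have [//|yNQ'] := boolP (y \in Qprime e r Q).
have inV s : s \in Qprime e r Q -> s \in VQ e r Q := subsetP Qprime_sub_VQ s.
have yV : y \in VQ e r Q.
  have [s sQ ys] : exists2 s, s \in Qprime e r Q & below y s.
    case: (eqVneq y r) => [_|_] /=; first by exists s1.
    have [yrs1|] := boolP (conn y r s1); last by exists s1.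
    exists s2 => //; apply: contra yN12 => yrs2.
    by rewrite conn_sym in yrs1; apply: connect_trans yrs1 yrs2.
  case/VQP: (inV s sQ) => q qQ sq; apply/VQP; exists q => //.
  exact: below_trans ys sq.
have toward s : s \in Qprime e r Q ->
    exists2 a, a \in [set v in VQ e r Q | e y v] & conn y a s.
  move=> sQ; have sy : s != y by apply: contraNneq yNQ' => <-.
  have [a eya yas] := neighbor_toward sy.
  by exists a; rewrite // inE eya (neighbor_in_VQ yV (inV s sQ) eya yas).
have distinct a b t u : conn y a t -> conn y b u -> ~~ conn y t u -> a != b.
  move=> yat ybu; apply: contraNneq => ab; rewrite ab conn_sym in yat.
  exact: connect_trans yat ybu.
have [a1 a1N ya1] := toward _ s1Q; have [a2 a2N ya2] := toward _ s2Q.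
have [a3 a3N ya3] := toward _ s3Q.
case/negP: yNQ'; rewrite inE; apply/orP; right; rewrite inE yV.
apply/card_gt2P; exists a1, a2, a3; split=> //; split.
- exact: distinct ya1 ya2 yN12.
- exact: distinct ya2 ya3 yN23.
- by apply: distinct ya3 ya1 _; rewrite conn_sym.
Qed.

End RootedSubtrees.

End TreeSeparation.

Theorem mainTheorem6 (T : finType) (e : rel T) (r : T) (Q : {set T}) :
  is_tree e -> Q != set0 ->
  1 <= #|centroids e (Qprime e r Q)| <= 2.
Proof.
move=> tree Qn0; rewrite card_centroids_le2 // andbT.
have Q'n0 : Qprime e r Q != set0 by rewrite setU_eq0 negb_and Qn0.
have [u cu] := exists_centroid tree Q'n0 (@Qprime_branch_closed _ _ tree r Q).
by apply/card_gt0P; exists u; rewrite inE.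
Qed.
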